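(* There is a constant $c>0$ such that for every $\rho \geqslant 1$ and every $n$, $\operatorname{xc}(\mathrm{CUT}(n), \rho\,\mathrm{CUT}(n)) \geqslant 2^{cn}$. Consequently, for every $\rho\geqslant 1$, every $\rho$-approximate EF of the Max CUT problem with arbitrary weights (whose associated pair is $P = Q = \mathrm{CUT}(n)$) has size $2^{\Omega(n)}$.
   Context: Let $K_n = (V_n,E_n)$ be the complete graph on $n$ vertices. For $X \subseteq V_n$, $\delta(X)$ is the set of edges with exactly one endpoint in $X$, and $\chi^{\delta(X)} \in \mathbb{R}^{E_n}$ its characteristic vector. The cut polytope is $\mathrm{CUT}(n) = \mathrm{conv}\{\chi^{\delta(X)} \mid X \subseteq V_n\}$. For polyhedra $P\subseteq Q \subseteq \mathbb{R}^d$, an extended formulation of the pair $P,Q$ is a system $Ex+Fy = g$, $y \geqslant \mathbf 0$, $y\in\mathbb{R}^r$, such that $K = \{x \mid \exists y: Ex + Fy = g, y \geqslant \mathbf 0\}$ satisfies $P \subseteq K \subseteq Q$; its size is $r$, and $\operatorname{xc}(P,Q)$ is the minimum size of such an EF. A $\rho$-approximate EF for Max CUT with arbitrary weights is an EF of the pair $\mathrm{CUT}(n), \rho\,\mathrm{CUT}(n)$. *)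

From HB Require Import structures.
From mathcomp Require Import all_boot all_order all_algebra.
From mathcomp Require Import reals exp.
Set Implicit Arguments. Unset Strict Implicit. Unset Printing Implicit Defensive.
Import Order.TTheory GRing.Theory Num.Theory.
Local Open Scope ring_scope.

(* Edge set E_n of the complete graph K_n on vertex set V_n = 'I_n:
   unordered pairs {i,j}, represented as ordered pairs (i,j) with i < j. *)
Definition edge (n : nat) := {e : 'I_n * 'I_n | (e.1 < e.2)%N}.

Definition vecE (R : realType) (n : nat) := edge n -> R.

Definition cut_vec (R : realType) (n : nat) (X : {set 'I_n}) : vecE R n :=
  fun e => if ((val e).1 \in X) != ((val e).2 \in X) then 1 else 0.

Definition CUT (R : realType) (n : nat) : vecE R n -> Prop :=
  fun x => exists lam : {set 'I_n} -> R,
    [/\ forall X, 0 <= lam X,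
        \sum_(X : {set 'I_n}) lam X = 1 &
        forall e, x e = \sum_(X : {set 'I_n}) lam X * cut_vec R X e].

Definition scale_set (R : realType) (n : nat) (rho : R) (S : vecE R n -> Prop)
  : vecE R n -> Prop :=
  fun x => exists2 z, S z & forall e, x e = rho * z e.

Definition EF_proj (R : realType) (n m r : nat)
  (E : 'I_m -> edge n -> R) (F : 'I_m -> 'I_r -> R) (g : 'I_m -> R)
  : vecE R n -> Prop :=
  fun x => exists y : 'I_r -> R,
    (forall j, 0 <= y j) /\
    forall i, \sum_(e : edge n) E i e * x e + \sum_(j < r) F i j * y j = g i.

Definition has_EF (R : realType) (n : nat) (P Q : vecE R n -> Prop) (r : nat) : Prop :=
  exists (m : nat) (E : 'I_m -> edge n -> R) (F : 'I_m -> 'I_r -> R) (g : 'I_m -> R),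
    (forall x, P x -> EF_proj E F g x) /\ (forall x, EF_proj E F g x -> Q x).

(* xc(P,Q) >= b : every extended formulation of the pair P, Q has size >= b
   (xc is the minimum of the sizes, +oo if there is none). *)
Definition xc_ge (R : realType) (n : nat) (P Q : vecE R n -> Prop) (b : R) : Prop :=
  forall r, has_EF P Q r -> b <= r%:R.

From HB Require Import structures.
From mathcomp Require Import all_boot all_order all_algebra.
From mathcomp Require Import reals exp boolp.
From mathcomp Require Import ring lra zify.
Import Order.TTheory GRing.Theory Num.Theory.
Set Implicit Arguments. Unset Strict Implicit. Unset Printing Implicit Defensive.

(* Write n = m + 2 and let subsets a, b of {0, .., m - 1} live on the vertices
   2, .., m + 1. For each a, the vertex weights l (l_0 = |a| - 1, l_1 = 1,
   l_(i+2) = -[i in a]) sum to zero, so sum_(i<j) l_i l_j x_ij <= 0 is valid for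
   CUT(n); being homogeneous it stays valid for rho CUT(n), whatever rho is. Its
   slack at the cut delta({1} u (b + 2)) is (1 - |a n b|)^2.
   Given an EF of size r, each lift coordinate j yields a rectangle: the rows a whose
   face forces y_j = 0, times the columns b whose lift has y_j > 0. These r
   rectangles avoid every pair with |a n b| = 1 and cover all 3^m disjoint pairs;
   such a rectangle holds at most 2^m disjoint pairs, so r >= (3/2)^m. Together with
   r >= 2 (a lift with one coordinate contains a ray) this gives r^4 >= 2^n. *)

Fixpoint bitseqs (m : nat) : seq (seq bool) :=
  if m is m'.+1 then [seq false :: a | a <- bitseqs m'] ++ [seq true :: a | a <- bitseqs m']
  else [:: [::]].

Definition meet_size (m : nat) (a b : seq bool) : nat :=
  \sum_(i < m) (nth false a i && nth false b i).

Lemma meet_sizeS m x y a b :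
  meet_size m.+1 (x :: a) (y :: b) = (x && y) + meet_size m a b.
Proof. by rewrite /meet_size big_ord_recl. Qed.

Lemma big_bitseqsS m (F : seq bool -> nat) :
  \sum_(a <- bitseqs m.+1) F a =
  \sum_(a <- bitseqs m) F (false :: a) + \sum_(a <- bitseqs m) F (true :: a).
Proof. by rewrite /= big_cat !big_map. Qed.

Definition disjoint_pairs m (A B : pred (seq bool)) : nat :=
  \sum_(a <- bitseqs m) \sum_(b <- bitseqs m) [&& A a, B b & meet_size m a b == 0].

Lemma disjoint_pairs_all m : disjoint_pairs m predT predT = 3 ^ m.
Proof.
elim: m => [|m IH]; first by rewrite /disjoint_pairs /= !big_seq1 /meet_size big_ord0.
rewrite /disjoint_pairs big_bitseqsS expnS -IH -big_split big_distrr /=.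
apply: eq_bigr => a _; rewrite !big_bitseqsS -!big_split big_distrr /=.
by apply: eq_bigr => b _; rewrite !meet_sizeS /= !add0n addn0; case: (_ == 0).
Qed.

(* For disjoint a, b the extensions 1 :: a and 1 :: b
   meet exactly once, so A (1 :: a) and B (1 :: b) exclude each other; hence the
   disjoint pairs of A x B are counted by those of A0 x (B0 u B1) and
   (A0 u A1) x B0. *)
Lemma disjoint_pairs_rect m (A B : pred (seq bool)) :
  (forall a b, A a -> B b -> meet_size m a b != 1) -> disjoint_pairs m A B <= 2 ^ m.
Proof.
elim: m A B => [|m IH] A B noone.
  by rewrite /disjoint_pairs /= !big_seq1; case: [&& _, _ & _].
pose A0 a := A (false :: a); pose A1 a := A (true :: a).
pose B0 b := B (false :: b); pose B1 b := B (true :: b).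
have split_pairs : disjoint_pairs m.+1 A B <=
    disjoint_pairs m A0 (predU B0 B1) + disjoint_pairs m (predU A0 A1) B0.
  rewrite /disjoint_pairs big_bitseqsS -!big_split /=; apply: leq_sum => a _.
  rewrite !big_bitseqsS -!big_split /=; apply: leq_sum => b _.
  have := noone (true :: a) (true :: b); rewrite !meet_sizeS /= !add0n add1n /= /A0 /A1 /B0 /B1.
  case: (A (false :: a)); case: (A (true :: a)); case: (B (false :: b));
    case: (B (true :: b)); case: (meet_size m a b =P 0) => [->|] //=; by move/(_ isT isT).
rewrite expnS mul2n -addnn; apply: (leq_trans split_pairs); apply: leq_add.
  apply: IH => a b ha /orP[] hb; by have := noone _ _ ha hb; rewrite meet_sizeS.
apply: IH => a b /orP[] ha hb; by have := noone _ _ ha hb; rewrite meet_sizeS.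
Qed.

Lemma rect_cover_size m r (A B : 'I_r -> pred (seq bool)) :
  (forall j a b, A j a -> B j b -> meet_size m a b != 1) ->
  (forall a b, meet_size m a b = 0 -> exists j, A j a && B j b) ->
  3 ^ m <= r * 2 ^ m.
Proof.
move=> rect cover; rewrite -disjoint_pairs_all.
have -> : r * 2 ^ m = \sum_(j < r) 2 ^ m by rewrite sum_nat_const card_ord.
apply: (@leq_trans (\sum_(j < r) disjoint_pairs m (A j) (B j))); last first.
  by apply: leq_sum => j _; apply: disjoint_pairs_rect; apply: rect.
rewrite /disjoint_pairs [X in _ <= X]exchange_big; apply: leq_sum => a _.
rewrite [X in _ <= X]exchange_big; apply: leq_sum => b _ /=.
case: eqP => [/cover [j hj]|_]; last by [].
by rewrite (bigD1 j) //= andbT hj.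
Qed.

Lemma quartic_bound m r : 2 <= r -> 3 ^ m <= r * 2 ^ m -> 2 ^ m.+2 <= r ^ 4.
Proof.
move=> r2 growth; have r4 : 2 ^ 4 <= r ^ 4 by rewrite leq_exp2r.
case: m growth => [|[|m]] growth; [exact: leq_trans r4 | exact: leq_trans r4 |].
have small k : 4 * 32 ^ k.+2 <= 81 ^ k.+2.
  elim: k => [|k IH]; first by [].
  by rewrite (expnS 32) (expnS 81) mulnCA; apply: leq_mul.
have pow4 b k : (b ^ k) ^ 4 = (b ^ 4) ^ k by rewrite -!expnM mulnC.
have growth4 : (3 ^ m.+2) ^ 4 <= (r * 2 ^ m.+2) ^ 4 by rewrite leq_exp2r.
rewrite expnMn !pow4 in growth4.
rewrite -(@leq_pmul2r (16 ^ m.+2)) ?expn_gt0 //.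
have -> : 2 ^ m.+4 * 16 ^ m.+2 = 4 * 32 ^ m.+2.
  by rewrite 2!expnS mulnA -mulnA -expnMn.
exact: leq_trans (small m) growth4.
Qed.

Local Open Scope ring_scope.

Definition dot (R : pzRingType) (T : finType) (w x : T -> R) : R := \sum_(t : T) w t * x t.

Definition affine2 (R : pzRingType) (T : Type) (t : R) (u v : T -> R) : T -> R :=
  fun i => (1 - t) * u i + t * v i.

Lemma dot_comb (R : comPzRingType) (T I : finType) (mu : I -> R) (xs : I -> T -> R) w :
  dot w (fun i => \sum_k mu k * xs k i) = \sum_k mu k * dot w (xs k).
Proof.
rewrite /dot; under eq_bigr => i _ do rewrite mulr_sumr.
rewrite exchange_big; apply: eq_bigr => k _; rewrite mulr_sumr.
by apply: eq_bigr => i _; rewrite mulrCA.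
Qed.

Lemma affine2E (R : pzRingType) (T : Type) t (u v : T -> R) :
  affine2 t u v = fun i => \sum_(b : bool) (if b then t else 1 - t) * (if b then v else u) i.
Proof. by apply/funext => i; rewrite big_bool /= addrC. Qed.

Lemma dot_affine2 (R : comPzRingType) (T : finType) t (w u v : T -> R) :
  dot w (affine2 t u v) = (1 - t) * dot w u + t * dot w v.
Proof. by rewrite affine2E dot_comb big_bool /= addrC. Qed.

Section LiftedPolyhedron.
Variables (R : realType) (n k r : nat).
Variables (E : 'I_k -> edge n -> R) (F : 'I_k -> 'I_r -> R) (g : 'I_k -> R).

Definition lift_eqs (x : vecE R n) (y : 'I_r -> R) : Prop :=
  forall i, dot (E i) x + dot (F i) y = g i.

(* [EF_proj E F g x] unfolds to [exists y, lifted x y]. *)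
Definition lifted (x : vecE R n) (y : 'I_r -> R) : Prop :=
  (forall j, 0 <= y j) /\ lift_eqs x y.

Lemma lift_eqs_affine (I : finType) (mu : I -> R) xs ys :
  \sum_k mu k = 1 -> (forall k, lift_eqs (xs k) (ys k)) ->
  lift_eqs (fun e => \sum_k mu k * xs k e) (fun j => \sum_k mu k * ys k j).
Proof.
move=> mu1 eqs i; rewrite !dot_comb -big_split /=.
under eq_bigr => l _ do rewrite -mulrDr eqs.
by rewrite -mulr_suml mu1 mul1r.
Qed.

Lemma lift_eqs_affine2 t x0 y0 x1 y1 :
  lift_eqs x0 y0 -> lift_eqs x1 y1 -> lift_eqs (affine2 t x0 x1) (affine2 t y0 y1).
Proof.
move=> eqs0 eqs1; rewrite !affine2E; apply: lift_eqs_affine => [|[]] //.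
by rewrite big_bool /= addrC subrK.
Qed.

Lemma lifted_convex (I : finType) (mu : I -> R) xs ys :
  (forall k, 0 <= mu k) -> \sum_k mu k = 1 -> (forall k, lifted (xs k) (ys k)) ->
  lifted (fun e => \sum_k mu k * xs k e) (fun j => \sum_k mu k * ys k j).
Proof.
move=> mu0 mu1 L; split; last by apply: lift_eqs_affine => // l; case: (L l).
by move=> j; apply: sumr_ge0 => l _; apply: mulr_ge0 => //; case: (L l).
Qed.

Definition face_forces (w : edge n -> R) (j : 'I_r) : Prop :=
  forall x y, lifted x y -> dot w x = 0 -> y j = 0.

(* Average the face points witnessing each coordinate of [S] not being forced. *)
Lemma face_support_point w x0 y0 (S : pred 'I_r) :
  lifted x0 y0 -> dot w x0 = 0 -> (forall j, S j -> ~ face_forces w j) ->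
  exists x y, [/\ lifted x y, dot w x = 0 & forall j, S j -> 0 < y j].
Proof.
move=> L0 w0 free.
have /choice [p pP] : forall j, exists q : vecE R n * ('I_r -> R),
    [/\ lifted q.1 q.2, dot w q.1 = 0 & S j -> 0 < q.2 j].
  move=> j; have [Sj|] := boolP (S j); last by exists (x0, y0).
  have /existsNP [x /existsNP [y]] := free j Sj.
  move=> /not_implyP [Lxy /not_implyP [wx /eqP yj]]; exists (x, y); split => // _.
  by rewrite lt0r yj; case: Lxy => ->.
pose pt (o : option 'I_r) := if o is Some j then p j else (x0, y0).
have ptP o : lifted (pt o).1 (pt o).2 /\ dot w (pt o).1 = 0.
  by case: o => [j|] //=; case: (pP j).
pose mu (o : option 'I_r) : R := r.+1%:R^-1.
have mu0 o : 0 <= mu o by rewrite invr_ge0 ler0n.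
have mu1 : \sum_o mu o = 1.
  by rewrite sumr_const card_option card_ord -(mulr_natr (r.+1%:R)^-1) mulVf ?pnatr_eq0.
exists (fun e => \sum_o mu o * (pt o).1 e), (fun j => \sum_o mu o * (pt o).2 j).
have L : lifted (fun e => \sum_o mu o * (pt o).1 e) (fun j => \sum_o mu o * (pt o).2 j).
  by apply: lifted_convex => // o; case: (ptP o).
split=> //; first by rewrite dot_comb big1 // => o _; case: (ptP o) => _ ->; rewrite mulr0.
move=> j Sj; rewrite (bigD1 (Some j)) //=; apply: ltr_pwDl.
  by apply: mulr_gt0; [rewrite invr_gt0 ltr0n | case: (pP j) => _ _; apply].
apply: sumr_ge0 => o _; apply: mulr_ge0 => //; by case: (ptP o) => -[].
Qed.

Lemma small_ratio (ys yb : 'I_r -> R) :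
  (forall j, 0 < yb j -> 0 < ys j) ->
  exists2 eps : R, 0 < eps & forall j, 0 < yb j -> eps * yb j <= ys j.
Proof.
move=> pos; pose M := \sum_(j | 0 < yb j) yb j / ys j.
have ratio_ge0 j : 0 < yb j -> 0 <= yb j / ys j.
  by move=> ybj; rewrite divr_ge0 // ltW // pos.
have M0 : 0 <= M by apply: sumr_ge0.
exists (1 + M)^-1; first by rewrite invr_gt0; lra.
move=> j ybj; have ysj := pos j ybj.
have ratioM : yb j / ys j <= M.
  by rewrite /M (bigD1 j) //= lerDl; apply: sumr_ge0 => l /andP[/ratio_ge0].
rewrite mulrC ler_pdivrMr; last lra.
by rewrite -ler_pdivrMl // mulrC; lra.
Qed.

Lemma lifted_extend xs ys xb yb :
  lifted xs ys -> lifted xb yb -> (forall j, 0 < yb j -> 0 < ys j) ->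
  exists2 t : R, t < 0 & lifted (affine2 t xs xb) (affine2 t ys yb).
Proof.
move=> [ys0 eqs] [yb0 eqb] pos; have [eps eps0 ratio] := small_ratio pos.
exists (- eps); first by rewrite oppr_lt0.
split; last exact: lift_eqs_affine2.
move=> j; rewrite /affine2; have := ys0 j; have := yb0 j.
have [ybj|ybj0] := ltP 0 (yb j); first by have := ratio j ybj; nra.
have -> : yb j = 0 by apply/eqP; rewrite eq_le ybj0 yb0.
nra.
Qed.

Lemma face_coordinate w x0 y0 xb yb :
  (forall x y, lifted x y -> dot w x <= 0) ->
  lifted x0 y0 -> dot w x0 = 0 -> lifted xb yb -> dot w xb < 0 ->
  exists j, 0 < yb j /\ face_forces w j.
Proof.
move=> valid L0 w0 Lb wb; apply: contrapT => none.
have free j : 0 < yb j -> ~ face_forces w j by move=> ybj forced; apply: none; exists j.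
have [xs [ys [Ls ws pos]]] := face_support_point (S := fun j => 0 < yb j) L0 w0 free.
have [t t0 Lt] := lifted_extend Ls Lb pos.
by have := valid _ _ Lt; rewrite dot_affine2 ws mulr0 add0r; nra.
Qed.

Lemma lifted_ray (x0 : vecE R n) y0 x1 y1 : (r <= 1)%N ->
  lifted x0 y0 -> lifted x1 y1 ->
  (forall t, 1 <= t -> lifted (affine2 t x0 x1) (affine2 t y0 y1)) \/
  (forall t, t <= 0 -> lifted (affine2 t x0 x1) (affine2 t y0 y1)).
Proof.
move=> r1 [y00 eqs0] [y10 eqs1].
have eqs t := lift_eqs_affine2 t eqs0 eqs1.
have [incr|not_incr] := pselect (forall j, y0 j <= y1 j).
  left=> t t1; split=> // j; rewrite /affine2.
  by have := incr j; have := y10 j; nra.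
move: not_incr => /existsNP [j /negP]; rewrite -ltNge => decr.
have all_j (l : 'I_r) : l = j by apply: ord_inj; have := ltn_ord l; have := ltn_ord j; lia.
right=> t t0; split=> // l; rewrite (all_j l) /affine2.
by have := y00 j; nra.
Qed.

End LiftedPolyhedron.

Lemma sum_lt_pairs (R : pzRingType) n (G : 'I_n -> 'I_n -> R) :
  (forall i j, G i j = G j i) -> (forall i, G i i = 0) ->
  (\sum_(p : 'I_n * 'I_n | (p.1 < p.2)%N) G p.1 p.2) *+ 2 = \sum_i \sum_j G i j.
Proof.
move=> Gsym G0.
have lt_part : \sum_(p : 'I_n * 'I_n | (p.1 < p.2)%N) G p.1 p.2 =
    \sum_(i : 'I_n) \sum_(j : 'I_n) (if (i < j)%N then G i j else 0).
  by rewrite (pair_big xpredT xpredT (fun i j : 'I_n => if (i < j)%N then G i j else 0))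
    big_mkcond.
have gt_part : \sum_(p : 'I_n * 'I_n | (p.1 < p.2)%N) G p.1 p.2 =
    \sum_(i : 'I_n) \sum_(j : 'I_n) (if (j < i)%N then G i j else 0).
  rewrite lt_part exchange_big.
  by apply: eq_bigr => i _; apply: eq_bigr => j _; rewrite Gsym.
rewrite mulr2n {1}lt_part gt_part -big_split; apply: eq_bigr => i _.
rewrite -big_split; apply: eq_bigr => j _ /=.
by case: (ltngtP i j) => [||/val_inj ->]; rewrite ?add0r ?addr0 ?G0.
Qed.

Lemma sum_edge (R : pzRingType) n (G : 'I_n * 'I_n -> R) :
  \sum_(e : edge n) G (val e) = \sum_(p : 'I_n * 'I_n | (p.1 < p.2)%N) G p.
Proof. by rewrite (big_sub [pred p : 'I_n * 'I_n | (p.1 < p.2)%N]). Qed.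

Lemma sum_mul_sum (R : pzRingType) n (a b : 'I_n -> R) :
  \sum_i \sum_j a i * b j = (\sum_i a i) * (\sum_j b j).
Proof. by rewrite mulr_suml; apply: eq_bigr => i _; rewrite mulr_sumr. Qed.

Lemma sum_sqr_diff (R : comPzRingType) n (l s : 'I_n -> R) :
  \sum_i \sum_j l i * l j * (s i - s j) ^+ 2 =
  ((\sum_i l i) * (\sum_i l i * s i ^+ 2) - (\sum_i l i * s i) ^+ 2) *+ 2.
Proof.
have -> : forall A B C : R, (A * B - C ^+ 2) *+ 2 = A * B + B * A - (C * C) *+ 2.
  by move=> A B C; rewrite !mulr2n; ring.
rewrite -!sum_mul_sum -!sumrMnl -!big_split -sumrB /=; apply: eq_bigr => i _.
rewrite -sumrMnl -!big_split -sumrB /=; apply: eq_bigr => j _; rewrite mulr2n; ring.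
Qed.

Lemma sum_edge_sqr_diff (R : numDomainType) n (l s : 'I_n -> R) :
  \sum_(e : edge n) l (val e).1 * l (val e).2 * (s (val e).1 - s (val e).2) ^+ 2 =
  (\sum_i l i) * (\sum_i l i * s i ^+ 2) - (\sum_i l i * s i) ^+ 2.
Proof.
apply: (@pmulrnI _ 2) => //; rewrite -sum_sqr_diff.
rewrite (sum_edge (fun p => l p.1 * l p.2 * (s p.1 - s p.2) ^+ 2)).
rewrite (@sum_lt_pairs _ _ (fun i j => l i * l j * (s i - s j) ^+ 2)) // => [i j|i].
  by ring.
by rewrite subrr expr0n mulr0.
Qed.

Section CutPolytope.
Variable R : realType.

Definition pair_weight n (l : 'I_n -> R) : edge n -> R :=
  fun e => l (val e).1 * l (val e).2.

Lemma cut_vec_sqr n (X : {set 'I_n}) e :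
  cut_vec R X e = (((val e).1 \in X)%:R - ((val e).2 \in X)%:R) ^+ 2.
Proof. by rewrite /cut_vec; case: ((val e).1 \in X); case: ((val e).2 \in X) => /=; ring. Qed.

(* Slack at a cut of the negative-type inequality [sum_(i<j) l_i l_j x_ij <= 0],
   valid for CUT(n) when [sum_i l_i = 0]. *)
Lemma dot_pair_weight_cut n (l : 'I_n -> R) X : \sum_i l i = 0 ->
  dot (pair_weight l) (cut_vec R X) = - (\sum_(i in X) l i) ^+ 2.
Proof.
move=> l0; rewrite /dot; under eq_bigr => e _ do rewrite cut_vec_sqr.
rewrite (sum_edge_sqr_diff l (fun i => (i \in X)%:R)) l0 mul0r sub0r.
congr (- _ ^+ 2); rewrite [RHS]big_mkcond; apply: eq_bigr => i _.
by case: (i \in X); rewrite ?mulr1 ?mulr0.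
Qed.

Lemma cut_vec_CUT n (X : {set 'I_n}) : CUT (cut_vec R X).
Proof.
exists (fun Y => (Y == X)%:R); split=> [Y||e]; first by rewrite ler0n.
  by rewrite (bigD1 X) //= eqxx big1 ?addr0 // => Y /negbTE ->.
rewrite (bigD1 X) //= eqxx mul1r big1 ?addr0 // => Y /negbTE ->.
by rewrite mul0r.
Qed.

Lemma scale_CUT_dot_le0 n (w : edge n -> R) rho x : 0 <= rho ->
  (forall X, dot w (cut_vec R X) <= 0) -> scale_set rho (@CUT R n) x -> dot w x <= 0.
Proof.
move=> rho0 valid [z [lam [lam0 lam1 zE]] xE].
have -> : dot w x = rho * \sum_X lam X * dot w (cut_vec R X).
  rewrite -dot_comb /dot mulr_sumr; apply: eq_bigr => e _.
  by rewrite xE zE mulrCA.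
apply: mulr_ge0_le0 => //; rewrite -oppr_ge0 -sumrN; apply: sumr_ge0 => X _.
by rewrite -mulrN mulr_ge0 ?oppr_ge0.
Qed.

Lemma scale_CUT_bounds n rho (x : vecE R n) e :
  0 <= rho -> scale_set rho (@CUT R n) x -> 0 <= x e <= rho.
Proof.
move=> rho0 [z [lam [lam0 lam1 zE]] ->].
have cut01 X : 0 <= cut_vec R X e <= 1 by rewrite /cut_vec; case: ifP; rewrite ?lexx ?ler01.
have z0 : 0 <= z e.
  by rewrite zE; apply: sumr_ge0 => X _; rewrite mulr_ge0 //; case/andP: (cut01 X).
have z1 : z e <= 1.
  rewrite zE -lam1; apply: ler_sum => X _; rewrite ler_piMr //.
  by case/andP: (cut01 X).
by apply/andP; split; nra.
Qed.
End CutPolytope.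

Section SubsetEncoding.
Variables (R : realType) (m : nat).

(* Vertices [0] and [1] are special; vertex [i + 2] stands for the element [i] of
   a subset of [{0, .., m - 1}]. *)
Definition row_weight (a : seq bool) (v : 'I_m.+2) : R :=
  if val v == 0%N then \sum_(i < m) (nth false a i)%:R - 1
  else if val v == 1%N then 1 else - (nth false a (val v).-2)%:R.

Definition col_cut (b : seq bool) : {set 'I_m.+2} :=
  [set v : 'I_m.+2 | (val v == 1%N) || (1 < val v)%N && nth false b (val v).-2].

Lemma sum_row_weight a : \sum_v row_weight a v = 0.
Proof. by rewrite !big_ord_recl /row_weight /= sumrN; ring. Qed.

Lemma sum_row_weight_col_cut a b :
  \sum_(v in col_cut b) row_weight a v = 1 - (meet_size m a b)%:R.
Proof.
rewrite big_mkcond !big_ord_recl /row_weight /col_cut /= !inE /= /meet_size natr_sum.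
under eq_bigr => i _ do rewrite inE /=.
rewrite add0r -sumrN; congr (_ + _); apply: eq_bigr => i _.
by case: (nth false a i); case: (nth false b i); rewrite ?oppr0.
Qed.
End SubsetEncoding.

Section CutExtendedFormulations.
Variables (R : realType) (m : nat) (rho : R).
Hypothesis rho0 : 0 <= rho.

Lemma EF_CUT_rect_cover r :
  has_EF (@CUT R m.+2) (scale_set rho (@CUT R m.+2)) r -> (3 ^ m <= r * 2 ^ m)%N.
Proof.
move=> [k [E [F [g [inK inQ]]]]].
have lift X : exists y, lifted E F g (cut_vec R X) y by apply: inK; apply: cut_vec_CUT.
have [y0 L0] := lift set0.
have /choice [ycol Lcol] : forall b, exists y, lifted E F g (cut_vec R (col_cut m b)) y.
  by move=> b; apply: lift.
pose w a := pair_weight (@row_weight R m a).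
have dot_cut a X : dot (w a) (cut_vec R X) = - (\sum_(v in X) @row_weight R m a v) ^+ 2.
  exact/dot_pair_weight_cut/sum_row_weight.
have valid a x y : lifted E F g x y -> dot (w a) x <= 0.
  move=> Lxy; apply: (scale_CUT_dot_le0 rho0) (inQ x (ex_intro _ y Lxy)) => X.
  by rewrite dot_cut oppr_le0 sqr_ge0.
have tight0 a : dot (w a) (cut_vec R set0) = 0 by rewrite dot_cut big_set0 expr0n oppr0.
have slack a b : dot (w a) (cut_vec R (col_cut m b)) = - (1 - (meet_size m a b)%:R) ^+ 2.
  by rewrite dot_cut sum_row_weight_col_cut.
pose A j a := `[< face_forces E F g (w a) j >].
pose B j b := 0 < ycol b j.
apply: (@rect_cover_size m r A B) => [j a b /asboolP forced pos|a b disj].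
  apply/eqP => one; move: pos; rewrite /B (forced _ _ (Lcol b)) ?ltxx //.
  by rewrite slack one subrr expr0n oppr0.
have neg : dot (w a) (cut_vec R (col_cut m b)) < 0.
  by rewrite slack disj subr0 expr1n ltrN10.
have [j [pos forced]] := face_coordinate (valid a) L0 (tight0 a) (Lcol b) neg.
by exists j; rewrite /A /B pos andbT; apply/asboolP.
Qed.

Lemma EF_CUT_size_ge2 r :
  has_EF (@CUT R m.+2) (scale_set rho (@CUT R m.+2)) r -> (2 <= r)%N.
Proof.
move=> [k [E [F [g [inK inQ]]]]]; rewrite leqNgt; apply/negP => r_le1.
have [y0 L0] : exists y, lifted E F g (cut_vec R set0) y by apply/inK/cut_vec_CUT.
have [y1 L1] : exists y, lifted E F g (cut_vec R [set ord0]) y by apply/inK/cut_vec_CUT.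
pose e01 : edge m.+2 := exist _ (ord0, lift ord0 ord0) isT.
have bounds t y : lifted E F g (affine2 t (cut_vec R set0) (cut_vec R [set ord0])) y ->
    0 <= t <= rho.
  move=> Lt; have := scale_CUT_bounds e01 rho0 (inQ _ (ex_intro _ y Lt)).
  by rewrite /affine2 /cut_vec /= !inE /= mulr0 mulr1 add0r.
case: (lifted_ray r_le1 L0 L1) => ray.
  have rho1 : 1 <= rho + 1 by rewrite lerDr.
  by have /bounds/andP[] := ray _ rho1; lra.
have neg1 : -1 <= 0 :> R by rewrite lerN10.
by have /bounds/andP[] := ray _ neg1; lra.
Qed.

Lemma EF_CUT_size r :
  has_EF (@CUT R m.+2) (scale_set rho (@CUT R m.+2)) r -> (2 ^ m.+2 <= r ^ 4)%N.
Proof.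
by move=> EF; apply: quartic_bound; [apply: EF_CUT_size_ge2 | apply: EF_CUT_rect_cover].
Qed.
End CutExtendedFormulations.

Lemma powR2_quarter_le (R : realType) (k r : nat) :
  (2 ^ k <= r ^ 4)%N -> powR 2 (4^-1 * k%:R) <= r%:R :> R.
Proof.
move=> le_k.
have pow4 : powR 2 (4^-1 * k%:R) ^+ 4 = 2 ^+ k :> R.
  rewrite -powR_mulrn ?powR_ge0 // -powRrM -powR_mulrn ?ler0n //; congr (powR _ _).
  by rewrite mulrAC mulVf ?mul1r // pnatr_eq0.
by rewrite -(@ler_pXn2r _ 4) // ?nnegrE ?powR_ge0 ?ler0n // pow4 -!natrX ler_nat.
Qed.

Theorem proposition3 (R : realType) :
  exists c : R, 0 < c /\
    forall (rho : R) (n : nat), 1 <= rho -> (2 <= n)%N ->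
      xc_ge (@CUT R n) (scale_set rho (@CUT R n)) (powR 2 (c * n%:R)).
Proof.
exists 4^-1; split; first by rewrite invr_gt0 ltr0n.
move=> rho [|[|m]] // rho1 _ r EF.
apply/powR2_quarter_le/(EF_CUT_size _ EF).
by apply: le_trans rho1.
Qed.
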